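(* Let $n\ge 1$ be an integer. Every set $A\subseteq\mathbb{Z}_{2^n}$ with $|A|=2^{n-1}+1$ satisfies $\mathrm{ST}(A)\ge 3\cdot 2^{n-1}$.
   Context: For $A\subseteq\mathbb{Z}_{2^n}$, $\mathrm{ST}(A)=|\{(x,y,z)\in A^3: x+y=z \text{ in } \mathbb{Z}_{2^n}\}|$ is the number of (ordered) Schur triples in $A$; in particular $(x,y,z)$ and $(y,x,z)$ are counted separately when $x\ne y$, and $x=y$ is allowed. *)

From mathcomp Require Import all_boot all_algebra.
Set Implicit Arguments. Unset Strict Implicit. Unset Printing Implicit Defensive.
Import GRing.Theory.
Local Open Scope ring_scope.

Definition ST (G : finZmodType) (A : {set G}) : nat :=
  #|[set t : G * G * G | [&& t.1.1 \in A, t.1.2 \in A, t.2 \in A &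
                             (t.1.1 + t.1.2)%R == t.2]]|%N.

From mathcomp Require Import all_boot all_algebra zify.
Set Implicit Arguments. Unset Strict Implicit. Unset Printing Implicit Defensive.
Import GRing.Theory.

(* Writing [overlap A x] for the number of y in A with x + y in A, ST(A) is the
   sum of [overlap A x] over x in A, while the sum over all x is |A|^2.  So ST(A)
   is |A|^2 minus the overlaps of the x outside A.  Such an overlap is at most
   |A|, and at most |A| - 1 when x <> 0: if A + x = A, comparing the sums of the
   elements of A and of A + x gives |A| x = 0, which is impossible in Z_(2^n)
   since |A| = 2^(n-1) + 1 is odd (for n = 1, A is the whole group).  With
   |A| = p + 1 and p - 1 elements outside A, where p = 2^(n-1), this gives
   ST(A) >= (p + 1)^2 - (p - 1) p - 1 = 3 p. *)

Section Overlap.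
Local Open Scope ring_scope.
Variable G : finZmodType.
Implicit Types (A : {set G}) (x : G).

Definition overlap A x := #|[set y in A | x + y \in A]|.

Lemma ST_sum_overlap A : ST A = (\sum_(x in A) overlap A x)%N.
Proof.
rewrite /ST; have -> : [set t : G * G * G | [&& t.1.1 \in A, t.1.2 \in A,
                                               t.2 \in A & t.1.1 + t.1.2 == t.2]]
    = (fun p : G * G => (p, p.1 + p.2)) @:
        [set p | [&& p.1 \in A, p.2 \in A & p.1 + p.2 \in A]].
  apply/setP => [[[a b] c]]; rewrite inE /=; apply/idP/imsetP.
    case/and4P => aA bA cA /eqP eqc; exists (a, b) => /=; last by rewrite eqc.
    by rewrite inE /= aA bA eqc.
  case=> -[a' b']; rewrite inE /= => /and3P[aA bA cA] [-> -> ->].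
  by rewrite aA bA cA /=.
rewrite card_imset => [|p q [] //].
rewrite -sum1dep_card /=.
rewrite -(pair_big_dep (mem A) (fun x y => (y \in A) && (x + y \in A)) (fun _ _ => 1%N)).
by apply: eq_bigr => x _; rewrite sum1dep_card.
Qed.

Lemma sum_overlap A : (\sum_x overlap A x)%N = (#|A| * #|A|)%N.
Proof.
under eq_bigr => x _ do rewrite /overlap -sum1dep_card.
rewrite (exchange_big_dep (mem A)) => [|x y _ /andP[] //] /=.
rewrite -sum_nat_const; apply: eq_bigr => y yA.
under eq_bigl => x do rewrite yA /=.
rewrite sum1dep_card -(card_imset A (addIr (- y))); apply: eq_card => x.
rewrite inE; apply/idP/imsetP => [xyA | [z zA ->]]; last by rewrite subrK.
by exists (x + y); rewrite ?addrK.
Qed.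

Lemma overlap_le A x : (overlap A x <= #|A|)%N.
Proof. by apply: subset_leq_card; apply/subsetP => y; rewrite inE => /andP[]. Qed.

Lemma stable_mulrn_card_eq0 A x : {in A, forall y, x + y \in A} -> x *+ #|A| = 0.
Proof.
move=> stabA; have imA : (+%R x) @: A = A.
  apply/eqP; rewrite eqEcard card_imset ?leqnn ?andbT; last exact: addrI.
  by apply/subsetP => _ /imsetP[y yA ->]; exact: stabA.
have := big_imset id (in2W (@addrI G x))
  : \sum_(z in (+%R x) @: A) z = \sum_(y in A) (x + y).
rewrite imA big_split sumr_const /= => /esym/eqP.
by rewrite -subr_eq0 addrK => /eqP.
Qed.

Lemma overlap_ltn A x : x *+ #|A| != 0 -> (overlap A x < #|A|)%N.
Proof.
apply: contraR; rewrite -leqNgt => le_A_overlap.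
have sub : [set y in A | x + y \in A] \subset A.
  by apply/subsetP => y; rewrite inE => /andP[].
have card_eq : #|[set y in A | x + y \in A]| = #|A|.
  by apply/eqP; rewrite eqn_leq overlap_le.
have eqA := subset_cardP card_eq sub.
apply/eqP/stable_mulrn_card_eq0 => y yA.
have : y \in [set y in A | x + y \in A] by rewrite eqA.
by rewrite inE => /andP[].
Qed.

Lemma overlap_le_pred A x :
  (x != 0 -> x *+ #|A| != 0) -> (overlap A x <= #|A|.-1 + (x == 0%R))%N.
Proof.
have [-> _ | _ /(_ isT)/overlap_ltn] := eqVneq x 0.
  by rewrite addn1 (leq_trans (overlap_le A 0)) // leqSpred.
by rewrite addn0 -ltnS; case: #|A|.
Qed.

Lemma ST_lower_bound A :
  {in ~: A, forall x, x != 0 -> x *+ #|A| != 0} ->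
  (#|A| * #|A| <= ST A + #|~: A| * #|A|.-1 + 1)%N.
Proof.
move=> torsion_free.
rewrite ST_sum_overlap -sum_overlap (bigID (mem A)) /= -addnA leq_add2l.
have -> : (\sum_(x | x \notin A) overlap A x = \sum_(x in ~: A) overlap A x)%N.
  by apply: eq_bigl => x; rewrite inE.
apply: (@leq_trans (\sum_(x in ~: A) (#|A|.-1 + (x == 0%R)))%N).
  by apply: leq_sum => x /torsion_free; apply: overlap_le_pred.
rewrite big_split sum_nat_const leq_add2l.
rewrite big_mkcond (bigD1 0) //= big1 => [|x /negPf ->]; last by case: ifP.
by rewrite addn0; case: ifP; rewrite ?eqxx.
Qed.

End Overlap.

Lemma Zp_mulrn_eq0 m k (x : 'Z_m) :
  1 < m -> coprime m k -> (x *+ k == 0)%R = (x == 0)%R.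
Proof.
by move=> m_gt1 co_mk; rewrite -mulr_natr mulIr_eq0 //; apply/mulIr; rewrite unitZpE.
Qed.

Theorem theorem1p8 (n : nat) (hn : (1 <= n)%N) (A : {set 'Z_(2 ^ n)})
  (hA : #|A| = (2 ^ n.-1).+1) :
  (3 * 2 ^ n.-1 <= ST A)%N.
Proof.
case: n hn A hA => // m _ A /= hA.
have pow_gt1 : 1 < 2 ^ m.+1 by rewrite -{1}(expn0 2) ltn_exp2l.
have cardG : #|'Z_(2 ^ m.+1)| = 2 ^ m.+1 by rewrite card_ord Zp_cast.
have cardAC : #|~: A| = (2 ^ m).-1.
  by move: (cardsC A) (expnS 2 m); rewrite hA cardG; lia.
have torsion_free : {in ~: A, forall x, x != 0%R -> (x *+ #|A| != 0)%R}.
  move=> x xAC; rewrite Zp_mulrn_eq0 // coprimeXl // coprime2n hA /= oddX orbF.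
  have : 0 < #|~: A| by apply/card_gt0P; exists x.
  by rewrite cardAC; case: (m).
have := ST_lower_bound torsion_free; rewrite cardAC hA.
have := expn_gt0 2 m; nia.
Qed.
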